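(* Let $A,B\in\mathbb R^{n\times n}$ with $A$ Lyapunov regular and $B\in\mathcal C_{\mathcal L}(A)\cap\{A\}''_{\mathbb R}$, with $L_R,M_R$ as in the context (all over $\mathbb R$). Suppose $S\in\mathbb R^{(m+1)\times(m+1)}$ satisfies $S^T=-S$ and $(S\otimes I_n)L_R=M_R$ for all $R\in\mathbb R^{n\times n}$. Write $S=\begin{bmatrix}0&\ell\\-\ell^T&-M\end{bmatrix}$ with $\ell\in\mathbb R^{1\times m}$ and $M=-M^T\in\mathbb R^{m\times m}$, and set $f(z)=\ell(zI_m-M)^{-1}\ell^T$. Then $f\in\mathcal{PRO}$ and $f(A)=B$.
   Context: $\otimes$ Kronecker product. $\mathcal{PRO}$ is the class of real rational functions $f$ with $\operatorname{Re}f(z)\ge0$ for $\operatorname{Re}z>0$ and $f(-\bar z)^*=-f(z)$; for a real rational $f$ and a matrix $A$ without eigenvalues at poles of $f$, $f(A)$ is the usual functional calculus. $A$ Lyapunov regular: eigenvalues satisfy $\lambda_i+\bar\lambda_j\ne0$. $\mathcal L_Y(X)=XY+Y^TX$, $\mathcal L_{A,B}=\mathcal L_B\circ\mathcal L_A^{-1}$ on $\mathbb R^{n\times n}$. $\{A\}''_{\mathbb R}$ bicommutant of $A$ in $\mathbb R^{n\times n}$; $\overline{\mathcal H}(A)=\{H\text{ symmetric}:HA+A^TH\succeq0\}$, $\mathcal C_{\mathcal L}(A)=\{B:\overline{\mathcal H}(A)\subseteq\overline{\mathcal H}(B)\}$. Let $\mathcal L_{A,B}(V)=\sum_{k,l=1}^m\mathbb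 H_{kl}C_kVC_l^T$ be a minimal (smallest possible $m$) real Hill representation with Hill matrix $\mathbb H$; under the hypotheses $\mathbb H$ is positive definite; fix invertible $P\in\mathbb R^{m\times m}$ with $\mathbb H=P^TP$. Set $\mathbf C=\begin{bmatrix}C_1^T\\\vdots\\C_m^T\end{bmatrix}$, $L_R=\begin{bmatrix}R\\(P\otimes R)\mathbf C\end{bmatrix}$, $M_R=\begin{bmatrix}RB\\-(P\otimes RA)\mathbf C\end{bmatrix}$. *)

From HB Require Import structures.
From mathcomp Require Import all_boot all_order all_algebra.
From mathcomp Require Import complex mxtens.
From mathcomp Require Import reals.

Set Implicit Arguments.
Unset Strict Implicit.
Unset Printing Implicit Defensive.

Import Order.TTheory GRing.Theory Num.Theory.
Local Open Scope ring_scope.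
Local Open Scope complex_scope.

Section Defs.
Variable R : realType.
Local Notation C := R[i].

Definition cmx {p q} (A : 'M[R]_(p, q)) : 'M[C]_(p, q) := map_mx (fun x => x%:C) A.
Definition cpoly (p : {poly R}) : {poly C} := map_poly (fun x => x%:C) p.

Definition lyap_regular n (A : 'M[R]_n) : Prop :=
  forall lam mu : C, eigenvalue (cmx A) lam -> eigenvalue (cmx A) mu ->
    lam + mu^* != 0.

Definition Lyap n (Y X : 'M[R]_n) : 'M[R]_n := X *m Y + Y^T *m X.

(* L_{A,B} = L_B o L_A^{-1}, via the matrices representing these linear maps
   on vectorized n x n matrices *)
Definition LAB n (A B V : 'M[R]_n) : 'M[R]_n :=
  vec_mx (mxvec V *m invmx (lin_mx (Lyap A)) *m lin_mx (Lyap B)).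

Definition symmetric n (H : 'M[R]_n) : Prop := H^T = H.
Definition psd n (H : 'M[R]_n) : Prop :=
  forall x : 'cV[R]_n, 0 <= (x^T *m H *m x) 0 0.

Definition bicommutant n (A B : 'M[R]_n) : Prop :=
  forall X : 'M[R]_n, X *m A = A *m X -> X *m B = B *m X.

Definition Hbar n (A H : 'M[R]_n) : Prop := symmetric H /\ psd (Lyap A H).

Definition CL n (A B : 'M[R]_n) : Prop := forall H, Hbar A H -> Hbar B H.

Definition hill_rep n (A B : 'M[R]_n) m (H : 'M[R]_m) (Cs : 'I_m -> 'M[R]_n) :=
  symmetric H /\
  forall V : 'M[R]_n,
    LAB A B V = \sum_(k < m) \sum_(l < m) H k l *: (Cs k *m V *m (Cs l)^T).

Definition minimal_hill_rep n (A B : 'M[R]_n) m (H : 'M[R]_m)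
  (Cs : 'I_m -> 'M[R]_n) :=
  hill_rep A B H Cs /\
  forall m' (H' : 'M[R]_m') (Cs' : 'I_m' -> 'M[R]_n), hill_rep A B H' Cs' -> (m <= m')%N.

(* bold C = [C_1^T; ...; C_m^T] : (m n) x n *)
Definition Cstack n m (Cs : 'I_m -> 'M[R]_n) : 'M[R]_(m * n, n) :=
  \matrix_(i, j) (Cs (mxtens_unindex i).1)^T (mxtens_unindex i).2 j.

Lemma kron_dim m n : ((1 + m) * n = n + m * n)%N.
Proof. by rewrite mulnDl mul1n. Qed.

Definition LR n m (P : 'M[R]_m) (Cs : 'I_m -> 'M[R]_n) (Rm : 'M[R]_n)
  : 'M[R]_((1 + m) * n, n) :=
  castmx (esym (kron_dim m n), erefl n) (col_mx Rm ((P *t Rm) *m Cstack Cs)).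

Definition MR n m (A B : 'M[R]_n) (P : 'M[R]_m) (Cs : 'I_m -> 'M[R]_n)
  (Rm : 'M[R]_n) : 'M[R]_((1 + m) * n, n) :=
  castmx (esym (kron_dim m n), erefl n)
    (col_mx (Rm *m B) (- ((P *t (Rm *m A)) *m Cstack Cs))).

Definition PRO_rat (p q : {poly R}) : Prop :=
  q != 0 /\
  (forall z : C, 0 < Re z -> (cpoly q).[z] != 0 ->
     0 <= Re ((cpoly p).[z] / (cpoly q).[z])) /\
  (forall z : C, (cpoly q).[z] != 0 -> (cpoly q).[- z^*] != 0 ->
     ((cpoly p).[- z^*] / (cpoly q).[- z^*])^* = - ((cpoly p).[z] / (cpoly q).[z])).

Definition rat_represents (f : C -> C) (dom : C -> Prop) (p q : {poly R}) :=
  q != 0 /\ forall z, dom z -> (cpoly q).[z] != 0 -> f z = (cpoly p).[z] / (cpoly q).[z].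

Definition in_PRO (f : C -> C) (dom : C -> Prop) : Prop :=
  exists p q, rat_represents f dom p q /\ PRO_rat p q.

Definition peval_mx n (A : 'M[R]_n) (p : {poly R}) : 'M[R]_n :=
  \sum_(i < size p) p`_i *: iter i (mulmx A) 1%:M.

(* f(A) = B via the functional calculus f(A) = p(A) q(A)^{-1}
   (A has no eigenvalue at a pole of f) *)
Definition rat_at_matrix (f : C -> C) (dom : C -> Prop) n (A B : 'M[R]_n) : Prop :=
  exists p q, rat_represents f dom p q /\ peval_mx A q \in unitmx /\
    peval_mx A p *m invmx (peval_mx A q) = B.

Definition fLM m (l : 'M[R]_(1, m)) (M : 'M[R]_m) (z : C) : C :=
  (cmx l *m invmx (z%:M - cmx M) *m (cmx l)^T) 0 0.
Definition domLM m (M : 'M[R]_m) (z : C) : Prop := (z%:M - cmx M) \in unitmx.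

End Defs.

From HB Require Import structures.
From mathcomp Require Import all_boot all_order all_algebra.
From mathcomp Require Import complex mxtens.
From mathcomp Require Import reals.
From mathcomp Require Import zify.

Set Implicit Arguments.
Unset Strict Implicit.
Unset Printing Implicit Defensive.

Import Order.TTheory GRing.Theory Num.Theory Num.Def.
Local Open Scope ring_scope.

(* Evaluated at R = 1 and read block row by block row, the identity
   (S (x) I) L_R = M_R says that for every column X of the stacked matrix
   (P (x) I) C one has B e = X l^T and the Sylvester equation A X = e l + X M^T.
   Iterating it gives A^i X = sum_(a<i) A^(i-1-a) e l (M^T)^a + X (M^T)^i, so by
   Cayley-Hamilton chi_M(A) B = p(A) for the polynomial p of [resolvent_num]; the
   same computation at the scalar A = z gives f = p / chi_M.  The eigenvalues of
   the real skew-symmetric M are imaginary, so by Lyapunov regularity none is an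
   eigenvalue of A, chi_M(A) is invertible and f(A) = B.  Finally, with
   y = l (z - M)^-1 we get f(z) = conj z |y|^2 + y M y^*, whose last term is
   imaginary, so Re f(z) >= 0 when Re z > 0; and transposing the resolvent gives
   f(-z) = -f(z). *)

Lemma comm_mx_invmx (K : comUnitRingType) k (X Y : 'M[K]_k) :
  X *m Y = Y *m X -> Y *m invmx X = invmx X *m Y.
Proof.
move=> XY; have [X_unit|X_nonunit] := boolP (X \in unitmx); last first.
  by rewrite invmx_out ?inE.
have iXYX : invmx X *m Y *m X = Y by rewrite -mulmxA -XY mulmxA mulVmx ?mul1mx.
by rewrite -{1}iXYX mulmxK.
Qed.

Lemma eigenvalue_unitmx (F : fieldType) k (A : 'M[F]_k) a :
  eigenvalue A a = (A - a%:M \notin unitmx).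
Proof. by rewrite /eigenvalue /eigenspace kermx_eq0 row_free_unit. Qed.

Lemma unitmxN (K : comUnitRingType) k (A : 'M[K]_k) : (- A \in unitmx) = (A \in unitmx).
Proof. by rewrite -scaleN1r unitmxZ // unitrN1. Qed.

Lemma invmxN (K : comUnitRingType) k (A : 'M[K]_k) : invmx (- A) = - invmx A.
Proof.
have [A_unit|A_nonunit] := boolP (A \in unitmx).
  by rewrite -scaleN1r invmxZ ?unitmxZ ?unitrN1 // invrN1 scaleN1r.
by rewrite !invmx_out ?inE ?unitmxN.
Qed.

Lemma unitmx_shift_char_poly (F : fieldType) k (A : 'M[F]_k) z :
  (z%:M - A \in unitmx) = ~~ root (char_poly A) z.
Proof.
by rewrite -eigenvalue_root_char eigenvalue_unitmx negbK -opprB unitmxN.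
Qed.

Section MatrixPolynomial.
Variable K : comNzRingType.

Definition mxpow k (A : 'M[K]_k) i : 'M[K]_k := iter i (mulmx A) 1%:M.

(* Over [R] this is [peval_mx]; it is also needed over [R[i]] and on 1 x 1 matrices. *)
Definition mxeval k (A : 'M[K]_k) (p : {poly K}) : 'M[K]_k :=
  \sum_(i < size p) p`_i *: mxpow A i.

Lemma mxpowS k (A : 'M[K]_k) i : mxpow A i.+1 = A *m mxpow A i.
Proof. by []. Qed.

Lemma mxpowSr k (A : 'M[K]_k) i : mxpow A i.+1 = mxpow A i *m A.
Proof.
elim: i => [|i IHi]; first by rewrite mxpowS mulmx1 mul1mx.
by rewrite mxpowS {1}IHi mulmxA.
Qed.

Lemma tr_mxpow k (A : 'M[K]_k) i : (mxpow A i)^T = mxpow A^T i.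
Proof. by elim: i => [|i IHi]; rewrite ?trmx1 // mxpowSr trmx_mul IHi. Qed.

Lemma mxeval_widen k (A : 'M[K]_k) (p : {poly K}) N : (size p <= N)%N ->
  mxeval A p = \sum_(i < N) p`_i *: mxpow A i.
Proof.
move=> le_pN; rewrite /mxeval (big_ord_widen N (fun i => p`_i *: mxpow A i)) //.
rewrite big_mkcond; apply: eq_bigr => i _; case: ifPn => // /negbTE.
by rewrite ltnNge => /negbFE le_pi; rewrite nth_default // scale0r.
Qed.

Lemma mxeval_is_linear k (A : 'M[K]_k) : linear (mxeval A).
Proof.
move=> c p q; pose N := maxn (size p) (size q).
have le_pN : (size p <= N)%N by rewrite leq_maxl.
have le_qN : (size q <= N)%N by rewrite leq_maxr.
have le_sumN : (size (c *: p + q)%R <= N)%N.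
  by rewrite (leq_trans (size_polyD _ _)) // geq_max (leq_trans (size_scale_leq _ _)).
rewrite !(@mxeval_widen _ A _ N) // scaler_sumr -big_split; apply: eq_bigr => i _.
by rewrite coefD coefZ scalerDl scalerA.
Qed.

HB.instance Definition _ k (A : 'M[K]_k) :=
  GRing.isLinear.Build K {poly K} 'M[K]_k _ (mxeval A) (mxeval_is_linear A).

Lemma mxevalXn k (A : 'M[K]_k) i : mxeval A 'X^i = mxpow A i.
Proof.
rewrite /mxeval size_polyXn big_ord_recr /= coefXn eqxx scale1r big1 ?add0r //.
by move=> j _; rewrite coefXn (ltn_eqF (ltn_ord j)) scale0r.
Qed.

Lemma mxeval_horner k (A : 'M[K]_k.+1) (p : {poly K}) : mxeval A p = horner_mx A p.
Proof.
rewrite /mxeval -[p in horner_mx _ p]coefK poly_def rmorph_sum; apply: eq_bigr => i _.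
rewrite -[RHS]/(horner_mx A _) horner_mxZ rmorphXn /= horner_mx_X.
by congr (_ *: _); elim: (val i) => [|j IHj]; rewrite ?expr0 // exprS -IHj.
Qed.

Lemma mxeval_char_poly k (A : 'M[K]_k) : mxeval A (char_poly A) = 0.
Proof.
case: k A => [|k] A; first by rewrite [LHS]flatmx0.
by rewrite mxeval_horner Cayley_Hamilton.
Qed.

Lemma mxeval_comm k (A : 'M[K]_k) (p q : {poly K}) :
  mxeval A p *m mxeval A q = mxeval A q *m mxeval A p.
Proof.
case: k A => [|k] A; first by rewrite [LHS]flatmx0 [RHS]flatmx0.
by rewrite !mxeval_horner; apply: comm_horner_mx2.
Qed.

Lemma mxeval_scalar (z : K) (p : {poly K}) : mxeval (z%:M : 'M[K]_1) p = p.[z]%:M.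
Proof.
rewrite /mxeval horner_coef raddf_sum /=; apply: eq_bigr => i _.
rewrite -scale_scalar_mx; congr (_ *: _).
by elim: (val i) => [|j IHj]; rewrite ?expr0 // mxpowS IHj -scalar_mxM exprS.
Qed.

(* (q(z) - q(w)) / (z - w) with the powers w^a replaced by the moments s a. *)
Definition divdiff_poly (q : {poly K}) (s : nat -> K) : {poly K} :=
  \sum_(i < size q) q`_i *: \sum_(a < i) s a *: 'X^(i.-1 - a).

Lemma mxeval_divdiff_poly k (A : 'M[K]_k) q s :
  mxeval A (divdiff_poly q s) =
  \sum_(i < size q) q`_i *: \sum_(a < i) s a *: mxpow A (i.-1 - a).
Proof.
rewrite linear_sum; apply: eq_bigr => i _; rewrite linearZ linear_sum /=.
by congr (_ *: _); apply: eq_bigr => a _; rewrite linearZ /= mxevalXn.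
Qed.

Definition resolvent_num m (l : 'rV[K]_m) (M : 'M[K]_m) : {poly K} :=
  divdiff_poly (char_poly M) (fun a => (l *m mxpow M a *m l^T) 0 0).

Lemma mxpow_sylvester p m (A : 'M[K]_p) (X : 'M[K]_(p, m)) (v : 'cV[K]_p)
    (l : 'rV[K]_m) (M : 'M[K]_m) :
  A *m X = v *m l + X *m M -> forall i,
  mxpow A i *m X =
  \sum_(a < i) mxpow A (i.-1 - a) *m v *m l *m mxpow M a + X *m mxpow M i.
Proof.
move=> sylvX; elim=> [|i IHi]; first by rewrite big_ord0 add0r mul1mx mulmx1.
rewrite mxpowSr -mulmxA sylvX mulmxDr mulmxA mulmxA -(mulmxA (mxpow A i)) IHi.
rewrite mulmxDl mulmx_suml -mulmxA -mxpowSr big_ord_recl /= subn0 addrA.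
congr (_ + _); rewrite mulmxA mulmx1; congr (_ + _); apply: eq_bigr => a _.
rewrite add0n -mxpowS mxpowSr !mulmxA; congr (mxpow A _ *m _ *m _ *m _ *m _).
by rewrite /bump /=; lia.
Qed.

(* The Cayley-Hamilton theorem for [M] kills the term [X *m mxpow M i]. *)
Lemma resolvent_num_sylvester p m (A : 'M[K]_p) (X : 'M[K]_(p, m))
    (v : 'cV[K]_p) (l : 'rV[K]_m) (M : 'M[K]_m) :
  A *m X = v *m l + X *m M ->
  mxeval A (char_poly M) *m X *m l^T = mxeval A (resolvent_num l M) *m v.
Proof.
move=> sylvX; set q := char_poly M.
have -> : mxeval A q *m X =
    \sum_(i < size q) q`_i *: \sum_(a < i) mxpow A (i.-1 - a) *m v *m l *m mxpow M a.
  rewrite /mxeval mulmx_suml.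
  under eq_bigr do rewrite -scalemxAl (mxpow_sylvester sylvX) scalerDr.
  rewrite big_split /=.
  have -> : \sum_(i < size q) q`_i *: (X *m mxpow M i) = X *m mxeval M q.
    by rewrite /mxeval mulmx_sumr; apply: eq_bigr => i _; rewrite scalemxAr.
  by rewrite mxeval_char_poly mulmx0 addr0.
rewrite mxeval_divdiff_poly !mulmx_suml; apply: eq_bigr => i _.
rewrite -!scalemxAl !mulmx_suml; congr (_ *: _); apply: eq_bigr => a _.
rewrite -scalemxAl -!mulmxA (mulmxA l) scalemxAr; congr (_ *m _).
by rewrite {1}[l *m _ *m _]mx11_scalar mul_mx_scalar.
Qed.

Lemma char_poly_trmx k (A : 'M[K]_k) : char_poly A^T = char_poly A.
Proof.
rewrite /char_poly -det_tr; congr (\det _); apply/matrixP => i j.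
by rewrite !mxE eq_sym.
Qed.

Lemma resolvent_num_trmx m (l : 'rV[K]_m) (M : 'M[K]_m) :
  resolvent_num l M^T = resolvent_num l M.
Proof.
rewrite /resolvent_num /divdiff_poly char_poly_trmx; apply: eq_bigr => i _.
congr (_ *: _); apply: eq_bigr => a _; congr (_ *: _).
have tr11 (Y : 'M[K]_1) : Y^T 0 0 = Y 0 0 by rewrite mxE.
by rewrite -[RHS]tr11 !trmx_mul trmxK tr_mxpow mulmxA.
Qed.

End MatrixPolynomial.

Lemma map_mxpow (K K' : comNzRingType) (f : {rmorphism K -> K'}) k (A : 'M[K]_k) i :
  map_mx f (mxpow A i) = mxpow (map_mx f A) i.
Proof. by elim: i => [|i IHi]; rewrite ?map_mx1 // !mxpowS map_mxM IHi. Qed.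

Lemma map_mxeval (F : fieldType) (K : comNzRingType) (f : {rmorphism F -> K}) k
    (A : 'M[F]_k) p :
  map_mx f (mxeval A p) = mxeval (map_mx f A) (map_poly f p).
Proof.
rewrite /mxeval size_map_poly raddf_sum; apply: eq_bigr => i _.
by rewrite /= map_mxZ map_mxpow coef_map.
Qed.

Lemma map_resolvent_num (K K' : comNzRingType) (f : {rmorphism K -> K'}) m
    (l : 'rV[K]_m) (M : 'M[K]_m) :
  injective f ->
  map_poly f (resolvent_num l M) = resolvent_num (map_mx f l) (map_mx f M).
Proof.
move=> f_inj; rewrite /resolvent_num /divdiff_poly -map_char_poly.
rewrite size_map_inj_poly ?rmorph0 // rmorph_sum /=; apply: eq_bigr => i _.
rewrite /= map_polyZ coef_map rmorph_sum /=; congr (_ *: _); apply: eq_bigr => a _.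
by rewrite map_polyZ map_polyXn -map_mxpow map_trmx -!map_mxM [X in _ = X *: _]mxE.
Qed.

Lemma resolvent_num_horner (F : fieldType) m (l : 'rV[F]_m) (M : 'M[F]_m) z :
  (z%:M - M) \in unitmx ->
  (resolvent_num l M).[z] = (char_poly M).[z] * (l *m invmx (z%:M - M) *m l^T) 0 0.
Proof.
move=> zM_unit; set y := l *m invmx (z%:M - M).
have sylv_y : (z%:M : 'M[F]_1) *m y = 1%:M *m l + y *m M.
  rewrite mul1mx mul_scalar_mx -[l in RHS](mulmxKV zM_unit) -/y.
  by rewrite mulmxBr mul_mx_scalar subrK.
have := resolvent_num_sylvester sylv_y; rewrite !mxeval_scalar mulmx1.
by move/(congr1 (fun Y : 'M_1 => Y 0 0)); rewrite -mulmxA mul_scalar_mx !mxE eqxx mulr1n => <-.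
Qed.

Lemma mxeval_unitmx (F : closedFieldType) k (A : 'M[F]_k) (p : {poly F}) :
  p \is monic -> (forall x, root p x -> ~~ eigenvalue A x) -> mxeval A p \in unitmx.
Proof.
case: k A => [|k] A p_monic p_noeig; first by rewrite unitmxE det_mx00 unitr1.
have [r p_split] := closed_field_poly_normal p.
rewrite mxeval_horner p_split (monicP p_monic) scale1r rmorph_prod big_seq.
apply: (big_ind (fun X : 'M_k.+1 => X \in unitmx)) => [|X Y|x r_x].
- exact: unitmx1.
- by move=> X_unit Y_unit; rewrite -[X * Y]/(X *m Y) unitmx_mul X_unit.
rewrite rmorphB /= horner_mx_X horner_mx_C -[_ \in unitmx]negbK -eigenvalue_unitmx.
by apply: p_noeig; rewrite p_split (monicP p_monic) scale1r root_prod_XsubC.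
Qed.

Section SkewSymmetric.
Variables (C : numClosedFieldType) (m : nat) (Mc : 'M[C]_m).
Hypotheses (Mc_real : Mc \is a realmx) (Mc_skew : Mc^T = - Mc).
Local Open Scope sesquilinear_scope.

Lemma skew_form_conj (u : 'rV[C]_m) :
  ((u *m Mc *m u ^t*) 0 0)^* = - (u *m Mc *m u ^t*) 0 0.
Proof.
have tr11 (Y : 'M[C]_1) : Y^T 0 0 = Y 0 0 by rewrite mxE.
have conj_tr : (u ^t*) ^ conjC = u^T by apply/matrixP => i j; rewrite !mxE conjCK.
transitivity (((u *m Mc *m u ^t*) ^ conjC) 0 0); first by rewrite [RHS]mxE.
rewrite !map_mxM (realmxC Mc_real) conj_tr -tr11 !trmx_mul trmxK Mc_skew.
by rewrite mulNmx mulmxN mxE mulmxA map_trmx.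
Qed.

Lemma Re_skew_form (u : 'rV[C]_m) : 'Re ((u *m Mc *m u ^t*) 0 0) = 0.
Proof. by rewrite ReE skew_form_conj subrr mul0r. Qed.

Lemma skew_eigenvalue_conj z : eigenvalue Mc z -> z^* = - z.
Proof.
move=> /eigenvalueP[u uMc u_neq0].
have dnorm_u : 0 < (u *m u ^t*) 0 0 by rewrite -dotmxE dnorm_gt0.
have form_u : (u *m Mc *m u ^t*) 0 0 = z * (u *m u ^t*) 0 0.
  by rewrite uMc -scalemxAl mxE.
have := skew_form_conj u; rewrite form_u rmorphM /= (conj_Creal (gtr0_real dnorm_u)).
by rewrite -mulNr; apply: mulIf; rewrite lt0r_neq0.
Qed.

Lemma Re_skew_resolvent_ge0 (l : 'rV[C]_m) z :
  l ^ conjC = l -> 0 < 'Re z -> (z%:M - Mc) \in unitmx ->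
  0 <= 'Re ((l *m invmx (z%:M - Mc) *m l^T) 0 0).
Proof.
move=> l_real Re_z_gt0 zMc_unit; set y := l *m invmx (z%:M - Mc).
have l_y : l = y *m (z%:M - Mc) by rewrite mulmxKV.
have lT : l^T = (z^*%:M + Mc) *m y ^t*.
  rewrite -{1}l_real {1}l_y map_mxM trmx_mul map_mxB map_scalar_mx /= (realmxC Mc_real).
  by rewrite linearB /= tr_scalar_mx Mc_skew opprK map_trmx.
rewrite lT mulmxA mulmxDr mul_mx_scalar mulmxDl -scalemxAl 2!mxE.
rewrite raddfD /= Re_skew_form addr0.
have dnorm_y : 0 <= (y *m y ^t*) 0 0 by rewrite -dotmxE dnorm_ge0.
rewrite ReMr ?(ger0_real dnorm_y) // Re_conj.
exact: mulr_ge0 (ltW Re_z_gt0) dnorm_y.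
Qed.

Lemma skew_resolventN (l : 'rV[C]_m) z :
  (l *m invmx ((- z)%:M - Mc) *m l^T) 0 0 = - (l *m invmx (z%:M - Mc) *m l^T) 0 0.
Proof.
have -> : (- z)%:M - Mc = - (z%:M - Mc)^T.
  by rewrite linearB /= tr_scalar_mx Mc_skew opprB raddfN /= addrC.
have tr11 (Y : 'M[C]_1) : Y^T 0 0 = Y 0 0 by rewrite mxE.
rewrite invmxN -trmx_inv mulmxN mulNmx mxE; congr (- _).
rewrite -[RHS]tr11.
by rewrite !trmx_mul trmxK mulmxA.
Qed.

End SkewSymmetric.

Lemma sum_mxtens_index (V : nmodType) a b (F : 'I_(a * b) -> V) :
  \sum_(r < a * b) F r = \sum_(i < a) \sum_(j < b) F (mxtens_index (i, j)).
Proof.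
rewrite pair_big /= (reindex (@mxtens_index a b)) /=; first by apply: eq_bigr => -[].
by exists (@mxtens_unindex a b) => x _; rewrite (mxtens_indexK, mxtens_unindexK).
Qed.

Lemma tensmx_mulE (K : pzRingType) a b p (T1 : 'M[K]_a) (T2 : 'M[K]_b)
    (E : 'M[K]_(a * b, p)) i j c :
  ((T1 *t T2) *m E) (mxtens_index (i, j)) c =
  \sum_(i' < a) \sum_(j' < b) T1 i i' * T2 j j' * E (mxtens_index (i', j')) c.
Proof.
rewrite mxE sum_mxtens_index; apply: eq_bigr => i' _; apply: eq_bigr => j' _.
by rewrite tensmxE.
Qed.

Lemma tensmx1_mulE (K : pzRingType) a b p (T : 'M[K]_a) (E : 'M[K]_(a * b, p)) i j c :
  ((T *t 1%:M) *m E) (mxtens_index (i, j)) c =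
  \sum_(i' < a) T i i' * E (mxtens_index (i', j)) c.
Proof.
rewrite tensmx_mulE; apply: eq_bigr => i' _.
rewrite (bigD1 j) //= big1 ?addr0 => [|j' /negbTE neq_j'j]; first by rewrite mxE eqxx mulr1.
by rewrite mxE eq_sym neq_j'j mulr0 mul0r.
Qed.

Lemma tens1mx_mulE (K : pzRingType) a b p (T : 'M[K]_b) (E : 'M[K]_(a * b, p)) i j c :
  ((1%:M *t T) *m E) (mxtens_index (i, j)) c =
  \sum_(j' < b) T j j' * E (mxtens_index (i, j')) c.
Proof.
rewrite tensmx_mulE (bigD1 i) //= [X in _ + X]big1 ?addr0 => [|i' /negbTE neq_i'i].
  by apply: eq_bigr => j' _; rewrite mxE eqxx mul1r.
by apply: big1 => j' _; rewrite mxE eq_sym neq_i'i !mul0r.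
Qed.

Section KronStack.
Variables (T : Type) (n m p : nat) (X : 'M[T]_(n, p)) (Y : 'M[T]_(m * n, p)).
Let XY := castmx (esym (kron_dim m n), erefl p) (col_mx X Y).

Lemma kron_col_mxEu j c : XY (mxtens_index ((ord0 : 'I_(1 + m)), j)) c = X j c.
Proof.
rewrite castmxE /= cast_ord_id.
suff -> : cast_ord (esym (esym (kron_dim m n))) (mxtens_index ((ord0 : 'I_(1 + m)), j))
  = lshift (m * n) j by rewrite col_mxEu.
by apply: val_inj => /=; rewrite mul0n add0n.
Qed.

Lemma kron_col_mxEd k j c :
  XY (mxtens_index ((lift ord0 k : 'I_(1 + m)), j)) c = Y (mxtens_index (k, j)) c.
Proof.
rewrite castmxE /= cast_ord_id.
suff -> : cast_ord (esym (esym (kron_dim m n)))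
    (mxtens_index ((lift ord0 k : 'I_(1 + m)), j)) = rshift n (mxtens_index (k, j)).
  by rewrite col_mxEd.
by apply: val_inj => /=; rewrite /bump /=; lia.
Qed.
End KronStack.

Section BlockEntries.
Variables (T : Type) (m : nat) (a : 'M[T]_1) (b : 'rV[T]_m) (c : 'cV[T]_m) (d : 'M[T]_m).
Let S : 'M[T]_(1 + m) := block_mx a b c d.

Lemma ord0_lshift : (ord0 : 'I_(1 + m)) = lshift m ord0. Proof. exact: val_inj. Qed.
Lemma lift0_rshift k : (lift ord0 k : 'I_(1 + m)) = rshift 1 k. Proof. exact: val_inj. Qed.

Lemma block1_mxE00 : S ord0 ord0 = a 0 0.
Proof. by rewrite /S ord0_lshift block_mxEul. Qed.
Lemma block1_mxE0r k : S ord0 (lift ord0 k) = b 0 k.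
Proof. by rewrite /S lift0_rshift ord0_lshift block_mxEur. Qed.
Lemma block1_mxEl0 k : S (lift ord0 k) ord0 = c k 0.
Proof. by rewrite /S lift0_rshift ord0_lshift block_mxEdl. Qed.
Lemma block1_mxEd k k' : S (lift ord0 k) (lift ord0 k') = d k k'.
Proof. by rewrite /S !lift0_rshift block_mxEdr. Qed.
End BlockEntries.

Definition unstack_col (T : Type) m n p (D : 'M[T]_(m * n, p)) (c : 'I_p) : 'M[T]_(n, m) :=
  \matrix_(j, k) D (mxtens_index (k, j)) c.

Lemma LR_MR_sylvester (R : realType) n m (A B : 'M[R]_n) (P : 'M[R]_m)
    (Cs : 'I_m -> 'M[R]_n) (S : 'M[R]_(1 + m)) (l : 'rV[R]_m) (M : 'M[R]_m) :
  (S *t 1%:M) *m LR P Cs 1%:M = MR A B P Cs 1%:M ->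
  S = block_mx 0 l (- l^T) (- M) ->
  forall c, let X := unstack_col ((P *t 1%:M) *m Cstack Cs) c in
  B *m delta_mx c 0 = X *m l^T /\ A *m X = delta_mx c 0 *m l + X *m M^T.
Proof.
move=> SLR_MR S_def c X; set D := (P *t 1%:M) *m Cstack Cs.
have rowE i j : \sum_(i' < 1 + m) S i i' * LR P Cs 1%:M (mxtens_index (i', j)) c
    = MR A B P Cs 1%:M (mxtens_index (i, j)) c by rewrite -SLR_MR tensmx1_mulE.
have XE j k : X j k = D (mxtens_index (k, j)) c by rewrite mxE.
split; apply/matrixP => j k.
  have := rowE ord0 j; rewrite big_ord_recl S_def block1_mxE00 !kron_col_mxEu.
  rewrite mxE mul0r add0r mul1mx ord1 -colE mxE => <-; rewrite mxE.
  under [RHS]eq_bigr do rewrite XE [l^T _ _]mxE.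
  by apply: eq_bigr => k' _; rewrite block1_mxE0r kron_col_mxEd mulrC.
have := rowE (lift ord0 k) j; rewrite big_ord_recl S_def block1_mxEl0.
rewrite kron_col_mxEu !kron_col_mxEd; under eq_bigr do rewrite block1_mxEd kron_col_mxEd.
have -> : P *t (1%:M *m A) *m Cstack Cs = (1%:M *t A) *m D.
  by rewrite /D mulmxA tensmx_mul mul1mx mulmx1 mul1mx.
rewrite [X in _ = X -> _]mxE tens1mx_mulE => /(congr1 -%R); rewrite opprK => AX_E.
rewrite mxE; under eq_bigr do rewrite XE; rewrite -AX_E !mxE big_ord1 opprD -sumrN.
congr (_ + _); first by rewrite !mxE mulNr opprK mulrC eq_sym /= andbT.
by apply: eq_bigr => k' _; rewrite XE !mxE mulNr opprK mulrC.
Qed.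

Lemma LR_MR_char_poly_mulmx (R : realType) n m (A B : 'M[R]_n) (P : 'M[R]_m)
    (Cs : 'I_m -> 'M[R]_n) (S : 'M[R]_(1 + m)) (l : 'rV[R]_m) (M : 'M[R]_m) :
  (S *t 1%:M) *m LR P Cs 1%:M = MR A B P Cs 1%:M ->
  S = block_mx 0 l (- l^T) (- M) ->
  mxeval A (char_poly M) *m B = mxeval A (resolvent_num l M).
Proof.
move=> SLR_MR S_def; apply/matrixP => j c.
have [B_col sylv_X] := LR_MR_sylvester SLR_MR S_def c.
have := resolvent_num_sylvester sylv_X.
rewrite resolvent_num_trmx char_poly_trmx -mulmxA -B_col mulmxA.
by move/(congr1 (fun Y : 'cV[R]_n => Y j 0)); rewrite -!colE !mxE.
Qed.

Section Complexification.
Variable R : realType.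
Local Notation C := R[i].

Lemma cmx_realmx p q (A : 'M[R]_(p, q)) : cmx A \is a realmx.
Proof. by apply/mxOverP => i j; rewrite mxE; apply/complex_realP; exists (A i j). Qed.

Lemma cmx_skew m (M : 'M[R]_m) : M = - M^T -> (cmx M)^T = - cmx M.
Proof.
move=> M_skew; have M_tr : M^T = - M by rewrite {2}M_skew opprK.
by rewrite /cmx map_trmx M_tr map_mxN.
Qed.

Lemma conj_horner_cpoly (p : {poly R}) (w : C) : ((cpoly p).[w])^* = (cpoly p).[w^*].
Proof.
rewrite -horner_map /= -map_poly_comp; congr (_.[_]); apply: eq_map_poly => r /=.
by apply: conj_Creal; apply/complex_realP; exists r.
Qed.

Lemma unitmx_shift_cpoly m (M : 'M[R]_m) (z : C) :
  (z%:M - cmx M \in unitmx) = ((cpoly (char_poly M)).[z] != 0).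
Proof. by rewrite unitmx_shift_char_poly /cpoly map_char_poly. Qed.

Lemma fLM_ratE m (l : 'rV[R]_m) (M : 'M[R]_m) (z : C) : domLM M z ->
  fLM l M z = (cpoly (resolvent_num l M)).[z] / (cpoly (char_poly M)).[z].
Proof.
move=> zM_unit; rewrite /cpoly map_resolvent_num; last exact: complexI.
rewrite resolvent_num_horner // map_char_poly [_ * (_ 0 0)]mulrC mulfK //.
by rewrite -[_ != 0]/(~~ root _ _) -unitmx_shift_char_poly.
Qed.

Lemma mxeval_char_poly_unitmx n m (A : 'M[R]_n) (M : 'M[R]_m) :
  lyap_regular A -> M = - M^T -> mxeval A (char_poly M) \in unitmx.
Proof.
move=> A_reg M_skew; rewrite -(map_unitmx (real_complex R)) map_mxeval map_char_poly.
apply: mxeval_unitmx (char_poly_monic _) _ => x; rewrite -eigenvalue_root_char => Mx.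
have conj_x := skew_eigenvalue_conj (cmx_realmx M) (cmx_skew M_skew) Mx.
apply/negP => Ax; have := A_reg x x Ax Ax.
by rewrite conj_x subrr eqxx.
Qed.

Lemma fLM_rat_represents m (l : 'rV[R]_m) (M : 'M[R]_m) :
  rat_represents (fLM l M) (domLM M) (resolvent_num l M) (char_poly M).
Proof.
by split=> [|z z_dom _]; [exact: monic_neq0 (char_poly_monic M) | exact: fLM_ratE].
Qed.

Lemma resolvent_num_PRO_rat m (l : 'rV[R]_m) (M : 'M[R]_m) :
  M = - M^T -> PRO_rat (resolvent_num l M) (char_poly M).
Proof.
move=> M_skew; set p := resolvent_num l M; set q := char_poly M.
have [Mc_real Mc_skew] := (cmx_realmx M, cmx_skew M_skew).
have dom_q z : (cpoly q).[z] != 0 -> domLM M z by rewrite /domLM unitmx_shift_cpoly.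
split; first exact: monic_neq0 (char_poly_monic M).
split=> [z Re_z_gt0 /dom_q z_dom | z /dom_q z_dom qNz_neq0].
  rewrite -fLM_ratE //; apply: (Re_skew_resolvent_ge0 Mc_real Mc_skew _ Re_z_gt0 z_dom).
  exact: realmxC (cmx_realmx l).
have Nz_dom : domLM M (- z).
  by apply: dom_q; rewrite -[z]conjCK -rmorphN -conj_horner_cpoly conjC_eq0.
(* the outer conjugation of [PRO_rat] is [conjc], convertible to [Num.conj] *)
change (((cpoly p).[- z^*] / (cpoly q).[- z^*])^* = - ((cpoly p).[z] / (cpoly q).[z])).
rewrite fmorph_div /= !conj_horner_cpoly.
have -> : (- z^*)^* = - z by apply: (canLR conjCK); rewrite rmorphN.
rewrite -(fLM_ratE l Nz_dom) -(fLM_ratE l z_dom).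
exact: skew_resolventN Mc_skew (cmx l) z.
Qed.

End Complexification.

Theorem lemma6p5 (R : realType) (n m : nat) (A B : 'M[R]_n)
  (H : 'M[R]_m) (Cs : 'I_m -> 'M[R]_n) (P : 'M[R]_m)
  (S : 'M[R]_(1 + m)) (l : 'M[R]_(1, m)) (M : 'M[R]_m) :
  lyap_regular A ->
  CL A B -> bicommutant A B ->
  minimal_hill_rep A B H Cs ->
  P \in unitmx -> H = P^T *m P ->
  S^T = - S ->
  (forall Rm : 'M[R]_n, (S *t (1%:M : 'M[R]_n)) *m LR P Cs Rm = MR A B P Cs Rm) ->
  S = block_mx 0 l (- l^T) (- M) ->
  M = - M^T ->
  in_PRO (fLM l M) (domLM M) /\ rat_at_matrix (fLM l M) (domLM M) A B.
Proof.
move=> A_reg _ _ _ _ _ _ SLR_MR S_def M_skew.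
have f_rat := fLM_rat_represents l M.
split; exists (resolvent_num l M), (char_poly M); split=> //.
  exact: resolvent_num_PRO_rat.
have qA_unit := mxeval_char_poly_unitmx A_reg M_skew.
split=> //; change (mxeval A (resolvent_num l M) *m invmx (mxeval A (char_poly M)) = B).
rewrite comm_mx_invmx; last exact: mxeval_comm.
by rewrite -(LR_MR_char_poly_mulmx (SLR_MR 1%:M) S_def) mulKmx.
Qed.
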